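(* Let $\overline{\mathsf{M}}_s$ be a fine saturated sharp monoid, $r$ a positive integer, and let $\mathfrak X_s$, $\mathfrak X_{s_r}$, $V\subseteq V_r$, $\mathsf{PL}_r$ and $\nabla$ be as in the context. Let $\delta\in\mathbb Z^{V_r}$ be supported on $V$. Let $D,D'\in\mathbb Z^{V_r}$ and $\alpha_D,\alpha_{D'}\in\mathsf{PL}_r$ satisfy $rD=\delta+\nabla\alpha_D$ and $rD'=\delta+\nabla\alpha_{D'}$, with $\alpha_D$ and $\alpha_{D'}$ both vanishing on every vertex of $V$, and suppose $D$ is linearly equivalent to $D'$, i.e. $D'-D\in\nabla(\mathsf{PL}_r)$. Then there exists $\beta\in\mathsf{PL}_r$ vanishing on $V$ with $D'=D+\nabla\beta$.
   Context: $\mathfrak X_s$ is a finite connected graph (loops and multiple edges allowed) with vertex set $V$, each edge $e$ having a length $\ell(e)\in\overline{\mathsf{M}}_s\setminus\{0\}$. Let $\overline{\mathsf{M}}_{s_r}=\tfrac1r\overline{\mathsf{M}}_s\subseteq\overline{\mathsf{M}}_s^{\mathsf{gp}}\otimes\mathbb Q$. $\mathfrak X_{s_r}$ is obtained by subdividing each edge $e$ of $\mathfrak X_s$ into a chain of exactly $r$ edges of length $\ell(e)/r$; its vertex set is $V_r\supseteq V$. $\mathsf{PL}_r$ is the group of functions $\alpha\colon V_r\to\overline{\mathsf{M}}_{s_r}^{\mathsf{gp}}$ with integer slopes: for each edge of $\mathfrak X_{s_r}$ of length $\lambda$ from $u$ to $u'$ there is $k\in\mathbb Z$ with $\alpha(u')-\alpha(u)=k\lambda$.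 Divisors are elements of $\mathbb Z^{V_r}$, and $\nabla\alpha(v)$ is the sum of the outgoing slopes of $\alpha$ along all half-edges at $v$. *)

From HB Require Import structures.
From mathcomp Require Import all_boot all_order all_algebra.
Set Implicit Arguments. Unset Strict Implicit. Unset Printing Implicit Defensive.
Import Order.TTheory GRing.Theory Num.Theory.
Local Open Scope ring_scope.

(* The monoid M̄_s is realized (up to isomorphism, which is no loss of
   generality since a fine saturated sharp monoid embeds in some Z^n) as a
   subset M of Q^n = 'rV[rat]_n.  Then M^gp is the set of differences of
   elements of M, and M^gp ⊗ Q is its Q-span inside Q^n. *)

Definition Mgp (n : nat) (M : pred 'rV[rat]_n) (x : 'rV[rat]_n) : Prop :=
  exists a b, a \in M /\ b \in M /\ x = a - b.

(* \bar M_{s_r}^gp = (1/r) M^gp inside M^gp ⊗ Q *)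
Definition Mgp_r (n r : nat) (M : pred 'rV[rat]_n) (x : 'rV[rat]_n) : Prop :=
  exists y, Mgp M y /\ x = (r%:R)^-1 *: y.

Definition fs_sharp_monoid (n : nat) (M : pred 'rV[rat]_n) : Prop :=
  [/\ 0 \in M,
      (forall a b, a \in M -> b \in M -> a + b \in M),
      (exists gens : seq 'rV[rat]_n, forall x,
          x \in M <-> exists c : 'I_(size gens) -> nat,
                        x = \sum_(i < size gens) gens`_i *+ c i),
      (forall x, Mgp M x -> forall m : nat, (0 < m)%N -> x *+ m \in M -> x \in M)
    & (forall x, x \in M -> - x \in M -> x = 0)].

Section Graph.
Variables (V E : finType) (src tgt : E -> V).

Definition adj : rel V :=
  fun u v => [exists e, ((src e == u) && (tgt e == v)) || ((src e == v) && (tgt e == u))].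
Definition connected_graph : Prop := forall u v, connect adj u v.

Variable r : nat.

(* vertices of the r-subdivision: original vertices, plus r-1 interior
   points on each edge *)
Definition Vr : finType := (V + (E * 'I_r.-1))%type.

(* the i-th point (0 <= i <= r) along edge e, from src e to tgt e *)
Definition point (e : E) (i : nat) : Vr :=
  if i == 0%N then inl (src e)
  else if insub i.-1 is Some j then inr (e, j : 'I_r.-1)
  else inl (tgt e).

Definition Er : finType := (E * 'I_r)%type.
Definition etail (ed : Er) : Vr := point ed.1 ed.2.
Definition ehead (ed : Er) : Vr := point ed.1 (ed.2).+1.

Variables (n : nat) (M : pred 'rV[rat]_n) (len : E -> 'rV[rat]_n).

Definition lenr (ed : Er) : 'rV[rat]_n := (r%:R)^-1 *: len ed.1.

Definition PL (a : Vr -> 'rV[rat]_n) : Prop :=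
  (forall v, Mgp_r r M (a v)) /\
  (forall ed : Er, exists k : int, a (ehead ed) - a (etail ed) = k%:~R *: lenr ed).

(* the slope of a along ed (from tail to head): the unique rational q with
   a(head) - a(tail) = q * lenr ed when it exists (lenr ed <> 0); it is an
   integer for a \in PL, and we read it as such via numq. *)
Definition slope (a : Vr -> 'rV[rat]_n) (ed : Er) : int :=
  let d := a (ehead ed) - a (etail ed) in
  let l := lenr ed in
  numq ((\sum_(j < n) d ord0 j * l ord0 j) / (\sum_(j < n) l ord0 j ^+ 2)).

Definition nabla (a : Vr -> 'rV[rat]_n) (v : Vr) : int :=
  \sum_(ed : Er) ((if etail ed == v then slope a ed else 0)
                  + (if ehead ed == v then - slope a ed else 0)).

End Graph.

From Pilot Require Import Defs.
From HB Require Import structures.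
From mathcomp Require Import all_boot all_order all_algebra.
From mathcomp Require Import ring.
Import Order.TTheory GRing.Theory Num.Theory.
Local Open Scope ring_scope.
Set Implicit Arguments. Unset Strict Implicit.

(* Choose gamma in PL_r with nabla gamma = D' - D and put
   H = alpha_D' - alpha_D - r gamma.  Then H has integer slopes m and
   nabla H = r D' - r D - r (D' - D) = 0, i.e. m is a circulation.  Summation
   by parts gives  sum_e m_e^2 l(e) / r = sum_e m_e (H(head e) - H(tail e))
   = - sum_v H(v) nabla H(v) = 0, and since the lengths l(e) lie in the sharp
   monoid, every m_e vanishes.  So H is constant along each subdivided edge,
   equal to -r gamma at the original endpoint, and
   beta = (alpha_D' - alpha_D) / r = H / r + gamma has the slopes of gamma,
   vanishes on V and takes the values gamma(v) - gamma(src e). *)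

Section SharpMonoid.
Variables (U : zmodType) (M : pred U).
Hypotheses (M0 : 0 \in M) (MD : forall a b, a \in M -> b \in M -> a + b \in M).

Lemma monoid_sum (I : finType) (P : pred I) (x : I -> U) :
  (forall i, x i \in M) -> \sum_(i | P i) x i \in M.
Proof. by move=> Mx; apply: (big_ind (fun y => y \in M)). Qed.

Lemma monoid_mulrn x N : x \in M -> x *+ N \in M.
Proof. by move=> Mx; elim: N => [|N IH] //; rewrite mulrS; apply: MD. Qed.

Lemma monoid_mulz_sqr x (c : int) : x \in M -> x *~ (c * c) \in M.
Proof.
have -> : c * c = absz (c * c) by rewrite gez0_abs // -expr2 sqr_ge0.
by rewrite -pmulrn; apply: monoid_mulrn.
Qed.

Hypothesis Msharp : forall x, x \in M -> - x \in M -> x = 0.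

Lemma sharp_sum_eq0 (I : finType) (x : I -> U) :
  (forall i, x i \in M) -> \sum_i x i = 0 -> forall i, x i = 0.
Proof.
move=> Mx + i; rewrite (bigD1 i) //= => /eqP; rewrite addr_eq0 => /eqP xiE.
apply: Msharp; first exact: Mx.
by rewrite xiE opprK; apply: monoid_sum.
Qed.

End SharpMonoid.

Lemma Mgp_rB (n r : nat) (M : pred 'rV[rat]_n) x y :
  (forall a b, a \in M -> b \in M -> a + b \in M) ->
  Mgp_r r M x -> Mgp_r r M y -> Mgp_r r M (x - y).
Proof.
move=> MD [_ [[a1 [b1 [Ma1 [Mb1 ->]]]] ->]] [_ [[a2 [b2 [Ma2 [Mb2 ->]]]] ->]].
exists ((a1 + b2) - (b1 + a2)); split; first by exists (a1 + b2), (b1 + a2); auto.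
by rewrite -scalerBr !opprD !opprK !addrA (addrAC a1 b2) (addrAC _ b2).
Qed.

Section Flow.
Variables (I W : finType) (tail head : I -> W).

Definition outflow (c : I -> int) (v : W) : int :=
  \sum_i ((if tail i == v then c i else 0) + (if head i == v then - c i else 0)).

Lemma outflowB c1 c2 v : outflow (fun i => c1 i - c2 i) v = outflow c1 v - outflow c2 v.
Proof.
rewrite /outflow -sumrB; apply: eq_bigr => i _.
by case: (tail i == v); case: (head i == v); ring.
Qed.

Lemma outflowZ k c v : outflow (fun i => k * c i) v = k * outflow c v.
Proof.
rewrite /outflow mulr_sumr; apply: eq_bigr => i _.
by case: (tail i == v); case: (head i == v); ring.
Qed.

Lemma sum_increment_outflow (U : zmodType) c (w : W -> U) :
  \sum_i (w (head i) - w (tail i)) *~ c i = - \sum_v w v *~ outflow c v.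
Proof.
have pick (u : W) (k : int) : \sum_v w v *~ (if u == v then k else 0) = w u *~ k.
  rewrite (bigD1 u) //= eqxx big1 ?addr0 // => v /negbTE.
  by rewrite eq_sym => ->; rewrite mulr0z.
rewrite /outflow; under [in RHS]eq_bigr do rewrite mulrz_sumr.
rewrite exchange_big -sumrN; apply: eq_bigr => i _ /=.
under eq_bigr do rewrite mulrzDr.
by rewrite big_split /= !pick mulrNz mulrzBl opprD opprK addrC.
Qed.

End Flow.

Section Subdivision.
Variables (V E : finType) (src tgt : E -> V) (r n : nat) (len : E -> 'rV[rat]_n).

Local Notation Vr := (Vr V E r).
Local Notation Er := (Er E r).
Local Notation etail := (@etail V E src tgt r).
Local Notation ehead := (@ehead V E src tgt r).
Local Notation slope := (slope src tgt len).
Local Notation nabla := (nabla src tgt len).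
Local Notation increment a ed := (a (ehead ed) - a (etail ed)).
Implicit Types (a b : Vr -> 'rV[rat]_n) (ed : Er).

Definition int_slopes (a : Vr -> 'rV[rat]_n) : Prop :=
  forall ed : Er, increment a ed = (slope a ed)%:~R *: lenr len ed.

Lemma incrementB a b ed : increment (a \- b) ed = increment a ed - increment b ed.
Proof. by rewrite /= !opprD !opprK addrACA. Qed.

Lemma incrementZ (k : rat) a ed : increment (k \*: a) ed = k *: increment a ed.
Proof. by rewrite /= scalerBr. Qed.

Lemma nabla_ext a b : (forall ed, increment a ed = increment b ed) -> nabla a =1 nabla b.
Proof. by move=> eq_ab v; apply: eq_bigr => ed _; rewrite /Defs.slope eq_ab. Qed.

Hypotheses (r_gt0 : (0 < r)%N) (len_neq0 : forall e, len e != 0).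

Lemma lenr_neq0 ed : lenr len ed != 0.
Proof.
by rewrite scaler_eq0 negb_or invr_eq0 pnatr_eq0 -lt0n r_gt0 len_neq0.
Qed.

Lemma slopeE a ed (k : int) : increment a ed = k%:~R *: lenr len ed -> slope a ed = k.
Proof.
move=> incrE; rewrite /Defs.slope incrE; set l := lenr len ed.
have -> : \sum_(j < n) (k%:~R *: l) ord0 j * l ord0 j = k%:~R * \sum_(j < n) l ord0 j ^+ 2.
  by rewrite mulr_sumr; apply: eq_bigr => j _; rewrite mxE -mulrA.
suff norm_neq0 : \sum_(j < n) l ord0 j ^+ 2 != 0 by rewrite mulfK // numq_int.
apply: contra (lenr_neq0 ed) => /eqP /psumr_eq0P sq_eq0.
apply/eqP/matrixP => i j; rewrite (ord1 i) [RHS]mxE; apply/eqP.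
by rewrite -sqrf_eq0; apply/eqP/sq_eq0 => // ? _; apply: sqr_ge0.
Qed.

Lemma int_slopesP a :
  (forall ed, exists k : int, increment a ed = k%:~R *: lenr len ed) -> int_slopes a.
Proof. by move=> a_int ed; have [k incrE] := a_int ed; rewrite (slopeE incrE). Qed.

Lemma slopeB a b ed : int_slopes a -> int_slopes b ->
  slope (a \- b) ed = slope a ed - slope b ed.
Proof. by move=> Ha Hb; apply: slopeE; rewrite incrementB Ha Hb -scalerBl rmorphB. Qed.

Lemma slopeZ (k : int) a ed : int_slopes a -> slope (k%:~R \*: a) ed = k * slope a ed.
Proof. by move=> Ha; apply: slopeE; rewrite incrementZ Ha scalerA intrM. Qed.

Lemma int_slopesB a b : int_slopes a -> int_slopes b -> int_slopes (a \- b).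
Proof. by move=> Ha Hb ed; rewrite slopeB // incrementB Ha Hb -scalerBl rmorphB. Qed.

Lemma int_slopesZ (k : int) a : int_slopes a -> int_slopes (k%:~R \*: a).
Proof. by move=> Ha ed; rewrite slopeZ // incrementZ Ha scalerA intrM. Qed.

Lemma nablaB a b v : int_slopes a -> int_slopes b -> nabla (a \- b) v = nabla a v - nabla b v.
Proof.
by move=> Ha Hb; rewrite -outflowB; apply: eq_bigr => ed _; rewrite slopeB.
Qed.

Lemma nablaZ (k : int) a v : int_slopes a -> nabla (k%:~R \*: a) v = k * nabla a v.
Proof.
by move=> Ha; rewrite -outflowZ; apply: eq_bigr => ed _; rewrite slopeZ.
Qed.

Lemma harmonic_int_slopes_flat (M : pred 'rV[rat]_n) a :
  fs_sharp_monoid M -> (forall e, len e \in M) ->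
  int_slopes a -> (forall v, nabla a v = 0) -> forall ed, increment a ed = 0.
Proof.
case=> M0 MD _ _ Msharp lenM Ha harmonic.
have energy : \sum_ed len ed.1 *~ (slope a ed * slope a ed) = 0.
  have : \sum_ed increment a ed *~ slope a ed = 0.
    rewrite sum_increment_outflow big1 ?oppr0 // => v _.
    by have -> : outflow etail ehead (slope a) v = 0 := harmonic v; rewrite mulr0z.
  under eq_bigr do rewrite Ha /lenr -scaler_int !scalerA -intrM mulrC -scalerA scaler_int.
  rewrite -scaler_sumr => /eqP; rewrite scaler_eq0 invr_eq0 pnatr_eq0.
  by rewrite gtn_eqF // => /eqP.
have sq_lenM ed : len ed.1 *~ (slope a ed * slope a ed) \in M.
  exact: monoid_mulz_sqr.
move=> ed; have := sharp_sum_eq0 M0 MD Msharp sq_lenM energy ed.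
move=> /eqP; rewrite -scaler_int scaler_eq0 (negbTE (len_neq0 _)) orbF intr_eq0.
by rewrite mulf_eq0 orbb Ha => /eqP ->; rewrite scale0r.
Qed.

Lemma flat_point a e i : (forall ed, increment a ed = 0) -> (i <= r)%N ->
  a (point src tgt r e i) = a (inl (src e)).
Proof.
move=> flat; elim: i => [|i IH] lt_ir //.
have /eqP := flat (e, Ordinal lt_ir); rewrite subr_eq0 => /eqP ->.
exact/IH/ltnW.
Qed.

Lemma flat_on_V a : (forall ed, increment a ed = 0) -> forall v, exists u, a v = a (inl u).
Proof.
move=> flat [u | [e j]]; first by exists u.
exists (src e); rewrite -(flat_point e flat (leq_trans (ltn_ord j) (leq_pred r))).
by rewrite /point /= valK.
Qed.

End Subdivision.

Theorem mainTheorem11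
  (n : nat) (M : pred 'rV[rat]_n) (HM : fs_sharp_monoid M)
  (r : nat) (Hr : (0 < r)%N)
  (V E : finType) (src tgt : E -> V) (Hconn : connected_graph src tgt)
  (len : E -> 'rV[rat]_n)
  (HlenM : forall e, len e \in M) (Hlen0 : forall e, len e != 0)
  (delta : Vr V E r -> int)
  (Hdelta : forall x : E * 'I_r.-1, delta (inr x) = 0)
  (D D' : Vr V E r -> int)
  (aD aD' : Vr V E r -> 'rV[rat]_n)
  (HaD : PL src tgt M len aD) (HaD' : PL src tgt M len aD')
  (HrD : forall v, (r%:Z * D v = delta v + nabla src tgt len aD v)%R)
  (HrD' : forall v, (r%:Z * D' v = delta v + nabla src tgt len aD' v)%R)
  (HaD0 : forall v : V, aD (inl v) = 0)
  (HaD'0 : forall v : V, aD' (inl v) = 0)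
  (Hlin : exists g, PL src tgt M len g /\ forall v, D' v - D v = nabla src tgt len g v) :
  exists b : Vr V E r -> 'rV[rat]_n,
    [/\ PL src tgt M len b, (forall v : V, b (inl v) = 0)
      & forall v, D' v = D v + nabla src tgt len b v].
Proof.
have [_ MD _ _ _] := HM.
have [g [[g_val /(int_slopesP Hr Hlen0) g_int] nabla_g]] := Hlin.
have aD_int := int_slopesP Hr Hlen0 HaD.2.
have aD'_int := int_slopesP Hr Hlen0 HaD'.2.
pose H := (aD' \- aD) \- r%:~R \*: g.
have dA_int := int_slopesB Hr Hlen0 aD'_int aD_int.
have rg_int := int_slopesZ Hr Hlen0 r g_int.
have H_int : int_slopes src tgt len H := int_slopesB Hr Hlen0 dA_int rg_int.
have H_harmonic v : nabla src tgt len H v = 0.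
  rewrite (nablaB Hr Hlen0) // (nablaZ Hr Hlen0) // (nablaB Hr Hlen0) //.
  by rewrite -nabla_g mulrBr HrD HrD'; ring.
have H_flat := harmonic_int_slopes_flat Hr Hlen0 HM HlenM H_int H_harmonic.
have r_neq0 : (r%:R : rat) != 0 by rewrite pnatr_eq0 -lt0n.
pose b := r%:R^-1 \*: (aD' \- aD).
have bE v : b v = r%:R^-1 *: H v + g v.
  by rewrite /b /H /= [in RHS]scalerBr scalerA mulVf // scale1r subrK.
have b_incr ed : b (ehead src tgt ed) - b (etail src tgt ed)
               = g (ehead src tgt ed) - g (etail src tgt ed).
  by rewrite !bE opprD addrACA -scalerBr H_flat scaler0 add0r.
exists b; split.
- split=> [v | ed]; last by exists (slope src tgt len g ed); rewrite b_incr g_int.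
  rewrite bE; have [u ->] := flat_on_V H_flat v; rewrite /H /= HaD0 HaD'0 subrr sub0r.
  by rewrite scalerN scalerA mulVf // scale1r addrC; apply: Mgp_rB.
- by move=> u; rewrite /b /= HaD0 HaD'0 subrr scaler0.
- by move=> v; rewrite (nabla_ext len b_incr) -nabla_g addrC subrK.
Qed.
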